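(* Let $m\ge 2$ be even and let $\{1,\dots,m\}=J_1\cup J_2$ be a partition with $|J_1|=|J_2|=m/2$. Consider the two-stage robust lot-sizing problem $$\min_{\mathbf x}\ \sum_{i=1}^m c_ix_i+\max_{\mathbf h\in\mathcal U}\ \min_{\mathbf y(\mathbf h)\ge\mathbf 0}\ \sum_{i=1}^m\sum_{j=1}^m d_{ij}y_{ij}(\mathbf h)$$ subject to $x_i+\sum_{j=1}^m y_{ji}(\mathbf h)-\sum_{j=1}^m y_{ij}(\mathbf h)\ge h_i$ for all $i\in[m]$ and all $\mathbf h\in\mathcal U$, and $0\le x_i\le K_i$ for all $i\in[m]$, with data $c_i=0$ for $i\in J_1$, $c_i=1$ for $i\in J_2$, $K_i=1$ for all $i$, $d_{ij}=0$ if $i\in J_1,j\in J_2$ and $d_{ij}=+\infty$ otherwise (so any policy sending positive flow $y_{ij}$ on a pair with $d_{ij}=+\infty$ has infinite cost), and $$\mathcal U=\Big\{\mathbf h\in[0,1]^m \;\Big|\; \sum_{i=1}^m h_i\le m/2\Big\}.$$ Let $z_{\sf AR}(\mathcal U)$ be the optimal value of this problem when $\mathbf y(\mathbf h)\in\mathbb R^{m^2}_+$ may depend arbitrarily on $\mathbf h$, and $z_{\sf Aff}(\mathcal U)$ its optimal value when $\mathbf y(\mathbf h)$ is restricted to be affine in $\mathbf h$, i.e., $\mathbf y(\mathbf h)=\mathbf P\mathbf h+\mathbf q$ with $\mathbf P\in\mathbb R^{m^2\times m}$, $\mathbf q\in\mathbb R^{m^2}$ and $\mathbf P\mathbf h+\mathbf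 q\ge\mathbf 0$ for all $\mathbf h\in\mathcal U$. Then $z_{\sf AR}(\mathcal U)=0$ and $z_{\sf Aff}(\mathcal U)=m/2-1$. In particular, the ratio between the optimal affine and optimal adjustable values is unbounded. *)

From HB Require Import structures.
From mathcomp Require Import all_boot all_order all_algebra.
From mathcomp Require Import all_classical all_reals.
From mathcomp Require Import ereal.
Set Implicit Arguments. Unset Strict Implicit. Unset Printing Implicit Defensive.
Import Order.TTheory GRing.Theory Num.Theory.
Local Open Scope classical_set_scope.
Local Open Scope ring_scope.

Section Robust.
Variables (R : realType) (m : nat).

(* second-stage cost; d i j in \bar R (0 or +oo here); with MathComp's
   extended multiplication +oo * 0 = 0 and +oo * y = +oo for y > 0, so any
   positive flow on an infinite-cost pair gives infinite cost *)
Definition rcost (d : 'I_m -> 'I_m -> \bar R) (y : 'I_m -> 'I_m -> R) : \bar R :=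
  (\sum_(i < m) \sum_(j < m) (d i j * (y i j)%:E))%E.

Definition ynonneg (y : 'I_m -> 'I_m -> R) : Prop := forall i j, 0 <= y i j.

Definition flow_ok (x : 'I_m -> R) (y : 'I_m -> 'I_m -> R) (h : 'I_m -> R) : Prop :=
  forall i, h i <= x i + \sum_(j < m) y j i - \sum_(j < m) y i j.

Definition first_ok (K x : 'I_m -> R) : Prop := forall i, 0 <= x i <= K i.

Definition lin_cost (c x : 'I_m -> R) : R := \sum_(i < m) c i * x i.

Definition z_AR (c K : 'I_m -> R) (d : 'I_m -> 'I_m -> \bar R)
  (U : set ('I_m -> R)) : \bar R :=
  ereal_inf [set ((lin_cost c x)%:E +
     ereal_sup [set ereal_inf [set rcost d y | y in [set y | ynonneg y /\ flow_ok x y h]]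
               | h in U])%E
   | x in [set x | first_ok K x]].

Definition aff (P : 'I_m -> 'I_m -> 'I_m -> R) (q : 'I_m -> 'I_m -> R)
  (h : 'I_m -> R) : 'I_m -> 'I_m -> R :=
  fun i j => \sum_(k < m) P i j k * h k + q i j.

Definition z_Aff (c K : 'I_m -> R) (d : 'I_m -> 'I_m -> \bar R)
  (U : set ('I_m -> R)) : \bar R :=
  ereal_inf [set ((lin_cost c xPq.1.1)%:E +
                  ereal_sup [set rcost d (aff xPq.1.2 xPq.2 h) | h in U])%E
   | xPq in [set xPq : ('I_m -> R) * ('I_m -> 'I_m -> 'I_m -> R) * ('I_m -> 'I_m -> R) |
       first_ok K xPq.1.1 /\
       forall h, U h -> ynonneg (aff xPq.1.2 xPq.2 h) /\
                        flow_ok xPq.1.1 (aff xPq.1.2 xPq.2 h) h]].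

Definition lot_c (J2 : {set 'I_m}) : 'I_m -> R := fun i => if i \in J2 then 1 else 0.
Definition lot_K : 'I_m -> R := fun _ => 1.
Definition lot_d (J1 J2 : {set 'I_m}) : 'I_m -> 'I_m -> \bar R :=
  fun i j => if (i \in J1) && (j \in J2) then 0%E else +oo%E.
Definition lot_U : set ('I_m -> R) :=
  [set h | (forall i, 0 <= h i <= 1) /\ \sum_(i < m) h i <= m%:R / 2].

End Robust.

(* Fully adjustable: produce at capacity in J1 and ship the spare capacity
   1 - h_i of J1 to J2 in proportion to the demands h_j; this is free.
   Affine: a policy with finite worst-case cost only ships from J1 to J2.
   Testing it on 0-1 scenarios with at most m/2 ones (which saturate the
   suppliers i with h_i = 1) forces y_ij(h) = P_iji h_i + q_ij for i in J1,
   with sum_j q_ij <= 1 and x_j + q_ij >= 1 for all i in J1, j in J2.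
   Summing the latter over J1 x J2 yields sum_(J2) x_j >= m/2 - 1, which the
   policy y_ij(h) = (1 - h_i)/(m/2) attains. *)

From HB Require Import structures.
From mathcomp Require Import all_boot all_order all_algebra.
From mathcomp Require Import all_classical all_reals.
From mathcomp Require Import ereal.
From mathcomp Require Import ring lra.
Set Implicit Arguments.
Unset Strict Implicit.
Unset Printing Implicit Defensive.
Import Order.TTheory GRing.Theory Num.Theory.
Local Open Scope ring_scope.

Section ProportionalPlan.
Variables (R : realFieldType) (I : finType) (A B : {set I}) (s t : I -> R).
Hypotheses (s_ge0 : forall i, 0 <= s i) (t_ge0 : forall j, 0 <= t j).
Hypothesis demand_le_supply : \sum_(j in B) t j <= \sum_(i in A) s i.

Definition proportional_plan (i j : I) : R := s i * t j / \sum_(k in A) s k.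

Lemma proportional_plan_ge0 i j : 0 <= proportional_plan i j.
Proof. by rewrite /proportional_plan !mulr_ge0 ?invr_ge0 ?sumr_ge0. Qed.

Lemma proportional_plan_out i : \sum_(j in B) proportional_plan i j <= s i.
Proof.
rewrite /proportional_plan -mulr_suml -mulr_sumr -mulrA.
have [->|S_neq0] := eqVneq (\sum_(k in A) s k) 0; first by rewrite invr0 !mulr0.
have S_gt0 : 0 < \sum_(k in A) s k by rewrite lt_def S_neq0 sumr_ge0.
by rewrite ler_piMr // ler_pdivrMr ?mul1r.
Qed.

Lemma proportional_plan_in j : j \in B -> t j <= \sum_(i in A) proportional_plan i j.
Proof.
move=> jB; rewrite /proportional_plan -mulr_suml -mulr_suml.
have [S0|S_neq0] := eqVneq (\sum_(k in A) s k) 0; last by rewrite mulrAC divff ?mul1r.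
rewrite S0 invr0 mulr0 -S0; apply: le_trans demand_le_supply.
by rewrite (bigD1 j) //= lerDl sumr_ge0.
Qed.

End ProportionalPlan.

Section RecourseCost.
Variables (R : realType) (m : nat).
Implicit Types (d : 'I_m -> 'I_m -> \bar R) (y : 'I_m -> 'I_m -> R).

Definition supported_in (A B : {set 'I_m}) y :=
  forall i j, ~~ ((i \in A) && (j \in B)) -> y i j = 0.

Definition restrict (A B : {set 'I_m}) y i j : R :=
  if (i \in A) && (j \in B) then y i j else 0.

Lemma restrict_supported A B y : supported_in A B (restrict A B y).
Proof. by move=> i j /negbTE; rewrite /restrict => ->. Qed.

Lemma sum_out_supported A B y i : supported_in A B y ->
  \sum_j y i j = if i \in A then \sum_(j in B) y i j else 0.
Proof.
move=> y_supp; have [iA|iA] := boolP (i \in A); last first.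
  by apply: big1 => j _; apply: y_supp; rewrite (negbTE iA).
rewrite [RHS]big_mkcond; apply: eq_bigr => j _.
by case: ifP => // jB; apply: y_supp; rewrite iA jB.
Qed.

Lemma sum_in_supported A B y j : supported_in A B y ->
  \sum_i y i j = if j \in B then \sum_(i in A) y i j else 0.
Proof.
move=> y_supp; have [jB|jB] := boolP (j \in B); last first.
  by apply: big1 => i _; apply: y_supp; rewrite (negbTE jB) andbF.
rewrite [RHS]big_mkcond; apply: eq_bigr => i _.
by case: ifP => // iA; apply: y_supp; rewrite iA jB.
Qed.

Lemma rcost_ge0 d y : (forall i j, 0 <= d i j)%E -> ynonneg y -> (0 <= rcost d y)%E.
Proof.
move=> d_ge0 y_ge0; apply: sume_ge0 => i _; apply: sume_ge0 => j _.
by rewrite mule_ge0 ?lee_fin.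
Qed.

Lemma rcost_eq0 d y : (forall i j, d i j != 0%E -> y i j = 0) -> rcost d y = 0%E.
Proof.
move=> y0; apply: big1 => i _; apply: big1 => j _.
by have [->|/y0->] := eqVneq (d i j) 0%E; rewrite ?mul0e ?mule0.
Qed.

Lemma rcost_pinfty d y i j : (forall i j, 0 <= d i j)%E -> ynonneg y ->
  d i j = +oo%E -> 0 < y i j -> rcost d y = +oo%E.
Proof.
move=> d_ge0 y_ge0 dij y_gt0; apply/eqP; rewrite eq_le leey /= /rcost.
have term_ge0 k l : (0 <= d k l * (y k l)%:E)%E by rewrite mule_ge0 ?lee_fin.
rewrite (bigD1 i) //=; apply: le_trans (leeDl _ (sume_ge0 _ _)); last first.
  by move=> k _; apply: sume_ge0.
rewrite (bigD1 j) //=; apply: le_trans (leeDl _ (sume_ge0 _ _)) => //.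
by rewrite dij mulyr gtr0_sg // mul1e.
Qed.

Lemma z_AR_ge0 c K d (U : set ('I_m -> R)) h :
  (forall i, 0 <= c i) -> (forall i j, 0 <= d i j)%E -> U h -> (0 <= z_AR c K d U)%E.
Proof.
move=> c_ge0 d_ge0 Uh; apply: le_ereal_inf_tmp => _ [x x_first <-].
rewrite adde_ge0 //.
  by rewrite lee_fin sumr_ge0 // => i _; rewrite mulr_ge0 //; case/andP: (x_first i).
apply: le_trans (ereal_sup_ubound _) => /=; last by exists h.
by apply: le_ereal_inf_tmp => _ [y [y_ge0 _] <-]; exact: rcost_ge0.
Qed.

End RecourseCost.

Definition indicator (R : pzRingType) {T : finType} (A : {set T}) (t : T) : R :=
  if t \in A then 1 else 0.

Lemma sum_indicator (R : pzRingType) (T : finType) (A : {set T}) :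
  \sum_t indicator R A t = #|A|%:R.
Proof. by rewrite /indicator -big_mkcond /= sumr_const. Qed.

Lemma aff_indicator (R : realType) (m : nat) P q (A : {set 'I_m}) i j :
  aff P q (indicator R A) i j = \sum_(l in A) P i j l + q i j.
Proof.
rewrite /aff [in RHS]big_mkcond; congr (_ + _); apply: eq_bigr => l _.
by rewrite /indicator; case: (l \in A); rewrite ?mulr1 ?mulr0.
Qed.

Lemma aff0 (R : realType) (m : nat) P q (i j : 'I_m) :
  aff P q (fun=> 0 : R) i j = q i j.
Proof. by rewrite /aff big1 ?add0r // => k _; rewrite mulr0. Qed.

Section LotSizing.
Variables (R : realType) (m n : nat) (J1 J2 : {set 'I_m}).
Hypotheses (J12_disjoint : [disjoint J1 & J2]) (J12_cover : J1 :|: J2 = [set: 'I_m]).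
Hypotheses (card_J1 : #|J1| = n) (card_J2 : #|J2| = n).

Local Notation U := (@lot_U R m).
Local Notation d := (lot_d R J1 J2).
Local Notation c := (lot_c R J2).
Local Notation K := (@lot_K R m).

Lemma in_J2 i : (i \in J2) = (i \notin J1).
Proof.
have /setP/(_ i) := J12_cover; rewrite !inE.
by have [/(disjointFr J12_disjoint)|] := boolP (i \in J1).
Qed.

Lemma sum_J1J2 F : \sum_i F i = \sum_(i in J1) F i + \sum_(i in J2) F i :> R.
Proof.
by rewrite (bigID (mem J1)) /=; congr (_ + _); apply: eq_bigl => i; rewrite in_J2.
Qed.

Lemma half_m : m%:R / 2 = n%:R :> R.
Proof.
have -> : m = (n + n)%N.
  have := cardsUI J1 J2; rewrite J12_cover cardsT card_ord card_J1 card_J2.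
  by move: J12_disjoint; rewrite -setI_eq0 => /eqP ->; rewrite cards0 addn0.
by rewrite natrD; lra.
Qed.

Lemma lot_UP h : U h <-> (forall i, 0 <= h i <= 1) /\ \sum_i h i <= n%:R.
Proof. by rewrite /lot_U half_m. Qed.

Lemma lot_U_indicator (A : {set 'I_m}) : (#|A| <= n)%N -> U (indicator R A).
Proof.
move=> cardA; apply/lot_UP; rewrite sum_indicator ler_nat; split => // i.
by rewrite /indicator; case: (i \in A); rewrite lexx ler01.
Qed.

Lemma lot_U0 : U (fun=> 0).
Proof. by apply/lot_UP; rewrite big1 // lexx ler01. Qed.

Lemma lot_d_ge0 i j : (0 <= d i j)%E.
Proof. by rewrite /lot_d; case: ifP. Qed.

Lemma rcost_lot_d_supported y : supported_in J1 J2 y -> rcost d y = 0%E.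
Proof.
move=> y_supp; apply: rcost_eq0 => i j; rewrite /lot_d.
by case: ifP => [_|/negbT nij _]; [rewrite eqxx | exact: y_supp].
Qed.

Lemma supported_rcost_lot_d y : ynonneg y -> rcost d y != +oo%E -> supported_in J1 J2 y.
Proof.
move=> y_ge0 cost_fin i j nij; apply/eqP; rewrite eq_le y_ge0 andbT leNgt.
apply: contra cost_fin => y_gt0; apply/eqP; apply: (rcost_pinfty _ y_ge0 _ y_gt0).
  exact: lot_d_ge0.
by rewrite /lot_d (negbTE nij).
Qed.

Lemma lin_cost_lot_c x : lin_cost c x = \sum_(i in J2) x i.
Proof.
rewrite /lin_cost [RHS]big_mkcond; apply: eq_bigr => i _.
by rewrite /lot_c; case: (i \in J2); rewrite ?mul1r ?mul0r.
Qed.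

Lemma lot_recourse_free h : U h ->
  exists2 y, ynonneg y /\ flow_ok (indicator R J1) y h & supported_in J1 J2 y.
Proof.
case/lot_UP => h01 h_sum.
have h_ge0 k : 0 <= h k by case/andP: (h01 k).
have h_le1 k : h k <= 1 by case/andP: (h01 k).
have spare_ge0 k : 0 <= 1 - h k by rewrite subr_ge0.
have demand_le_spare : \sum_(j in J2) h j <= \sum_(i in J1) (1 - h i).
  by move: h_sum; rewrite sum_J1J2 sumrB sumr_const card_J1; lra.
set plan := proportional_plan J1 (fun i => 1 - h i) h.
set y := restrict J1 J2 plan.
have y_supp : supported_in J1 J2 y by exact: restrict_supported.
exists y => //; split=> [i j|i].
  by rewrite /y /restrict; case: ifP => // _; exact: proportional_plan_ge0.
rewrite (sum_in_supported i y_supp) (sum_out_supported i y_supp) /indicator in_J2.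
have y_eq i' j' : i' \in J1 -> j' \in J2 -> y i' j' = plan i' j'.
  by move=> iJ1 jJ2; rewrite /y /restrict iJ1 jJ2.
have [iJ1|iJ1] := boolP (i \in J1) => /=.
  rewrite (eq_bigr _ (fun j => y_eq i j iJ1)).
  have := proportional_plan_out spare_ge0 demand_le_spare i; lra.
have iJ2 : i \in J2 by rewrite in_J2.
rewrite (eq_bigr _ (fun k kJ1 => y_eq k i kJ1 iJ2)).
have := proportional_plan_in h_ge0 demand_le_spare iJ2; lra.
Qed.

Lemma z_AR_lot : z_AR c K d U = 0%E.
Proof.
apply/eqP; rewrite eq_le; apply/andP; split; last first.
  apply: (z_AR_ge0 _ _ _ lot_U0) => [i|]; last exact: lot_d_ge0.
  by rewrite /lot_c; case: ifP.
apply: le_trans (ereal_inf_lbound _) _.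
  exists (indicator R J1) => // i; rewrite /indicator /lot_K.
  by case: (i \in J1); rewrite lexx ler01.
rewrite lin_cost_lot_c big1 ?add0e => [|i]; last by rewrite in_J2 /indicator => /negbTE ->.
apply: ge_ereal_sup => _ [h Uh <-]; have [y y_ok y_supp] := lot_recourse_free Uh.
apply: le_trans (ereal_inf_lbound _) _; first by exists y.
by rewrite rcost_lot_d_supported.
Qed.

Hypothesis n_gt0 : (0 < n)%N.

Let n_pos : 0 < n%:R :> R. Proof. by rewrite ltr0n. Qed.

Definition lot_x : 'I_m -> R := fun i => if i \in J2 then 1 - n%:R^-1 else 1.

Definition lot_P : 'I_m -> 'I_m -> 'I_m -> R :=
  fun i j k => if (i \in J1) && (j \in J2) && (k == i) then - n%:R^-1 else 0.

Definition lot_q : 'I_m -> 'I_m -> R :=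
  fun i j => if (i \in J1) && (j \in J2) then n%:R^-1 else 0.

Lemma aff_lot_policy h :
  aff lot_P lot_q h = restrict J1 J2 (fun i _ => (1 - h i) / n%:R).
Proof.
apply/funext => i; apply/funext => j; rewrite /aff /lot_P /lot_q /restrict.
case: ifP => ij /=; last by rewrite big1 ?add0r // => k _; rewrite mul0r.
rewrite (bigD1 i) //= eqxx big1 => [|k /negbTE ->]; last by rewrite mul0r.
by rewrite addr0; ring.
Qed.

Lemma lin_cost_lot_x : lin_cost c lot_x = n%:R - 1.
Proof.
rewrite lin_cost_lot_c (eq_bigr (fun=> 1 - n%:R^-1)) => [|i iJ2]; last by rewrite /lot_x iJ2.
by rewrite sumr_const card_J2 -[(1 - _) *+ n]mulr_natr mulrBl mul1r mulVf ?gt_eqF.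
Qed.

(* At j in J2 the inflow is (n - sum_(J1) h)/n >= h_j/n, so stocking 1 - 1/n
   at j covers h_j with a margin of (n - 1)(1 - h_j)/n >= 0. *)
Lemma lot_policy_feasible h : U h ->
  ynonneg (aff lot_P lot_q h) /\ flow_ok lot_x (aff lot_P lot_q h) h.
Proof.
case/lot_UP => h01 h_sum; rewrite aff_lot_policy.
have h_ge0 k : 0 <= h k by case/andP: (h01 k).
have h_le1 k : h k <= 1 by case/andP: (h01 k).
split=> [i j|i].
  by rewrite /restrict; case: ifP => // _; rewrite divr_ge0 ?subr_ge0.
have y_supp := @restrict_supported R m J1 J2 (fun i _ => (1 - h i) / n%:R).
rewrite (sum_in_supported i y_supp) (sum_out_supported i y_supp) /lot_x in_J2.
have [iJ1|iJ1] := boolP (i \in J1) => /=.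
  rewrite (eq_bigr (fun=> (1 - h i) / n%:R)) => [|j jJ2]; last by rewrite /restrict iJ1 jJ2.
  by rewrite sumr_const card_J2 -[(_ / _) *+ n]mulr_natr divfK ?gt_eqF //; lra.
have iJ2 : i \in J2 by rewrite in_J2.
rewrite (eq_bigr (fun k => (1 - h k) / n%:R)) => [|k kJ1]; last by rewrite /restrict kJ1 iJ2.
rewrite -mulr_suml sumrB sumr_const card_J1 subr0.
have h_J1 : \sum_(k in J1) h k + h i <= n%:R.
  by apply: le_trans h_sum; rewrite (sum_J1J2 h) lerD2l (bigD1 i) //= lerDl sumr_ge0.
set S := \sum_(k in J1) h k in h_J1 *.
have -> : 1 - n%:R^-1 + (n%:R - S) / n%:R = (n%:R *+ 2 - 1 - S) / n%:R.
  by field; rewrite gt_eqF.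
have : 0 <= (1 - h i) * (n%:R - 1) by rewrite mulr_ge0 ?subr_ge0 ?ler1n.
by rewrite ler_pdivlMr //; nra.
Qed.

Lemma z_Aff_lot_le : (z_Aff c K d U <= (n%:R - 1)%:E)%E.
Proof.
apply: le_trans (ereal_inf_lbound _) _.
  exists (lot_x, lot_P, lot_q) => //; split=> [i|h Uh]; last exact: lot_policy_feasible.
  have inv_n : 0 <= (n%:R : R)^-1 <= 1 by rewrite invr_ge0 ler0n invf_le1 // ler1n.
  by rewrite /= /lot_x /lot_K; case: ifP => _; apply/andP; split; lra.
rewrite /= lin_cost_lot_x -[leRHS]adde0 leeD2l //.
apply: ge_ereal_sup => _ [h Uh <-].
by rewrite aff_lot_policy rcost_lot_d_supported //; exact: restrict_supported.
Qed.

Section AffineLowerBound.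
Variables (x : 'I_m -> R) (P : 'I_m -> 'I_m -> 'I_m -> R) (q : 'I_m -> 'I_m -> R).
Hypothesis x_first : first_ok K x.
Hypothesis policy_ge0 : forall h, U h -> ynonneg (aff P q h).
Hypothesis policy_flow : forall h, U h -> flow_ok x (aff P q h) h.
Hypothesis policy_supported : forall h, U h -> supported_in J1 J2 (aff P q h).

Let x_le1 i : x i <= 1. Proof. by case/andP: (x_first i). Qed.

Lemma policy_out_J1 h i : U h -> i \in J1 -> \sum_j aff P q h i j <= x i - h i.
Proof.
move=> Uh iJ1; have := policy_flow Uh i.
by rewrite (sum_in_supported i (policy_supported Uh)) in_J2 iJ1 addr0; lra.
Qed.

Lemma policy_saturated h i j : U h -> i \in J1 -> h i = 1 -> aff P q h i j = 0.
Proof.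
move=> Uh iJ1 hi1; apply/eqP; rewrite eq_le policy_ge0 // andbT.
have := policy_out_J1 Uh iJ1; rewrite (bigD1 j) //= hi1.
have : 0 <= \sum_(k | k != j) aff P q h i k by apply: sumr_ge0 => k _; exact: policy_ge0.
have := x_le1 i; lra.
Qed.

Lemma sum_q_le1 i : i \in J1 -> \sum_(j in J2) q i j <= 1.
Proof.
move=> iJ1; have := policy_out_J1 lot_U0 iJ1; rewrite (eq_bigr _ (fun j _ => aff0 P q i j)).
have q_ge0 j : 0 <= q i j by rewrite -(aff0 P q) policy_ge0 //; exact: lot_U0.
rewrite (bigID (mem J2)) /=.
have : 0 <= \sum_(k | k \notin J2) q i k by apply: sumr_ge0 => k _; exact: q_ge0.
have := x_le1 i; lra.
Qed.

Section SeveralSuppliers.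
Hypothesis n_gt1 : (1 < n)%N.

(* Demand 1 at i alone, and at i and k together, saturate i: the coefficient of
   h_k in the flow out of i must vanish. *)
Lemma policy_offdiag i j k : i \in J1 -> k != i -> P i j k = 0.
Proof.
move=> iJ1 ki.
have U1 : U (indicator R [set i]) by apply: lot_U_indicator; rewrite cards1 ltnW.
have U2 : U (indicator R [set i; k]) by apply: lot_U_indicator; rewrite cards2 eq_sym ki.
have := policy_saturated j U1 iJ1; have := policy_saturated j U2 iJ1.
rewrite !aff_indicator big_set1 big_setU1 ?inE 1?eq_sym // big_set1 /indicator !inE eqxx.
by move=> /(_ erefl) /= e2 /(_ erefl) e1; lra.
Qed.

Lemma policy_J1E h i j : i \in J1 -> aff P q h i j = P i j i * h i + q i j.
Proof.
move=> iJ1; rewrite /aff (bigD1 i) //= big1 ?addr0 // => k ki.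
by rewrite policy_offdiag ?mul0r.
Qed.

(* Demand 1 everywhere in J1 except at i, and at j in J2: only i can ship to j,
   and it ships q i j. *)
Lemma x_add_q_ge1 i j : i \in J1 -> j \in J2 -> 1 <= x j + q i j.
Proof.
move=> iJ1 jJ2; have jN1 : j \notin J1 by rewrite -in_J2.
set A := j |: (J1 :\ i).
have UA : U (indicator R A).
  apply: lot_U_indicator; rewrite cardsU1 -card_J1 (cardsD1 i J1) iJ1.
  by rewrite leq_add2r leq_b1.
have := policy_flow UA j.
rewrite (sum_in_supported j (policy_supported UA)) (sum_out_supported j (policy_supported UA)).
rewrite jJ2 (negbTE jN1) subr0 (bigD1 i) //= big1 => [|k /andP[kJ1 ki]]; last first.
  by apply: policy_saturated => //; rewrite /indicator /A !inE ki kJ1 orbT.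
have i_neq_j : (i == j) = false by apply: contraNF jN1 => /eqP <-.
by rewrite policy_J1E // /indicator /A !inE i_neq_j !eqxx /= mulr0 add0r addr0.
Qed.

End SeveralSuppliers.

Lemma affine_first_stage_ge : n%:R - 1 <= \sum_(j in J2) x j.
Proof.
have [n1|n_gt1] := leqP n 1.
  have -> : n = 1%N by apply/eqP; rewrite eqn_leq n1 n_gt0.
  by rewrite subrr sumr_ge0 // => j _; case/andP: (x_first j).
have double_count : \sum_(i in J1) \sum_(j in J2) (1 - x j) <= n%:R.
  apply: le_trans (_ : \sum_(i in J1) \sum_(j in J2) q i j <= _).
    by do 2![apply: ler_sum => ? ?]; rewrite lerBlDl x_add_q_ge1.
  by rewrite -card_J1 -sum1_card natr_sum; apply: ler_sum => i; exact: sum_q_le1.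
move: double_count; rewrite sumr_const card_J1 sumrB sumr_const card_J2.
by rewrite -[(_ - _) *+ n]mulr_natr -[leRHS]mul1r ler_pM2r //; lra.
Qed.

End AffineLowerBound.

Lemma z_Aff_lot_ge : ((n%:R - 1)%:E <= z_Aff c K d U)%E.
Proof.
apply: le_ereal_inf_tmp => _ [[[x P] q] /= [x_first feasible] <-].
set S := ereal_sup _.
have S_ge0 : (0 <= S)%E.
  apply: le_trans (ereal_sup_ubound _); last by exists (fun=> 0); first exact: lot_U0.
  exact: rcost_ge0 lot_d_ge0 (feasible _ lot_U0).1.
have [->|S_fin] := eqVneq S +oo%E; first by rewrite addey ?leey.
have supported h : U h -> supported_in J1 J2 (aff P q h).
  move=> Uh; apply: supported_rcost_lot_d (feasible h Uh).1 _.
  apply: contra_neq S_fin => cost_oo; apply/eqP; rewrite eq_le leey /= -cost_oo.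
  by apply: ereal_sup_ubound; exists h.
rewrite -[leLHS]adde0 leeD // lee_fin lin_cost_lot_c.
by apply: (affine_first_stage_ge x_first _ _ supported) => h /feasible[].
Qed.

Lemma z_Aff_lot : z_Aff c K d U = (m%:R / 2 - 1)%:E.
Proof. by apply/eqP; rewrite eq_le half_m z_Aff_lot_le z_Aff_lot_ge. Qed.

End LotSizing.

Theorem lemma10 (R : realType) (m : nat) (J1 J2 : {set 'I_m}) :
  (2 <= m)%N -> ~~ odd m ->
  [disjoint J1 & J2] -> J1 :|: J2 = [set: 'I_m] ->
  #|J1| = m./2 -> #|J2| = m./2 ->
  z_AR (lot_c R J2) (@lot_K R m) (lot_d R J1 J2) (@lot_U R m) = 0%E /\
  z_Aff (lot_c R J2) (@lot_K R m) (lot_d R J1 J2) (@lot_U R m) = (m%:R / 2 - 1)%:E.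
Proof.
(* Evenness of m already follows from the partition into two halves. *)
move=> m_ge2 _ J12_disjoint J12_cover card_J1 card_J2.
have n_gt0 : (0 < m./2)%N by rewrite half_gt0.
split; first exact (z_AR_lot R J12_disjoint J12_cover card_J1 card_J2).
exact (z_Aff_lot R J12_disjoint J12_cover card_J1 card_J2 n_gt0).
Qed.
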